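(* Let $A_1,\ldots,A_n$ be events in a probability space, let $X$ be the number of these events that occur, and for $1\le j\le n$ let $S_j=\sum_{1\le i_1<\cdots<i_j\le n}P(A_{i_1}\cdots A_{i_j})$ (with $S_j=0$ for $j>n$). Then for all integers $r\ge 1$ and $k\ge r$, $$P(X\ge r)=\sum_{j=r}^{k}(-1)^{r+j}\binom{j-1}{r-1}S_j+(-1)^{r+k+1}\sum_{i=1}^{r}\binom{k-i}{r-i}E\left[\binom{X-i}{k-i+1}\right].$$
   Context: Binomial convention: for integers $s,t$, $\binom{t}{s}=0$ if $\min(s,t)<0$ or $s>t$; otherwise $\binom{t}{s}=\frac{t!}{s!(t-s)!}$. $A_{i_1}\cdots A_{i_j}$ denotes the intersection of the events. *)

From HB Require Import structures.
From mathcomp Require Import all_boot all_order all_algebra.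
From mathcomp Require Import all_classical all_reals all_analysis.
Set Implicit Arguments. Unset Strict Implicit. Unset Printing Implicit Defensive.
Import Order.TTheory GRing.Theory Num.Theory.
Local Open Scope classical_set_scope.
Local Open Scope ring_scope.

(* Binomial coefficient on integers with the paper's convention:
   binz t s = 0 if min(s,t) < 0 or s > t, else t!/(s!(t-s)!). *)
Definition binz (t s : int) : nat :=
  match t, s with
  | Posz t', Posz s' => 'C(t', s')
  | _, _ => 0%N
  end.

Definition num_occ (T : Type) (n : nat) (A : 'I_n -> set T) (x : T) : nat :=
  #|[set i : 'I_n | `[< A i x >]]|.

Definition inter_ev (T : Type) (n : nat) (A : 'I_n -> set T) (I : {set 'I_n}) : set T :=
  [set x | forall i : 'I_n, i \in I -> A i x].

Definition Sj (d : measure_display) (T : measurableType d) (R : realType)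
  (P : probability T R) (n : nat) (A : 'I_n -> set T) (j : nat) : \bar R :=
  (\sum_(I : {set 'I_n} | #|I| == j) P (inter_ev A I))%E.

(* Both sides depend on an outcome x only through the set occ(x) of events
   that occur at x.  Partitioning the space into the finitely many atoms
   {x | occ(x) = S}, the probability, every S_j (a j-set I contributes
   P(I <= occ), so S_j = E[C(X, j)]) and every expectation become finite sums
   over S weighted by P(atom S).  By linearity it then suffices to prove the
   identity for a fixed m = X:
     [r <= m] = sum_(j=r..k) (-1)^(r+j) C(j-1, r-1) C(m, j) + (-1)^(r+k+1) R_k,
   with R_k = sum_(i=1..r) C(k-i, r-i) C(m-i, k-i+1).  This goes by induction
   on k: for k = r it is Pascal's rule iterated, C(m, r) = R_r + [r <= m], and
   R_k + R_(k+1) = C(k, r-1) C(m, k+1) because the summands telescope. *)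

From HB Require Import structures.
From mathcomp Require Import all_boot all_order all_algebra.
From mathcomp Require Import all_classical all_reals all_analysis.
From mathcomp Require Import ring zify.
Import Order.TTheory GRing.Theory Num.Theory.
Local Open Scope classical_set_scope.
Local Open Scope ring_scope.

Lemma sumn_telescope (x t : nat -> nat) (a b : nat) : (a <= b)%N ->
  (forall i, (a <= i < b)%N -> x i + t i.+1 = t i)%N ->
  (\sum_(a <= i < b) x i + t b = t a)%N.
Proof.
elim: b => [|b IHb]; first by rewrite leqn0 => /eqP-> _; rewrite big_geq.
rewrite leq_eqVlt => /predU1P[-> _ | ]; first by rewrite big_geq.
rewrite ltnS => le_ab xt; rewrite big_nat_recr //= -addnA xt ?le_ab ?ltnSn //.
by apply: IHb => // i le_i_b; apply: xt; lia.
Qed.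

Lemma bin_pascal_sum (m r : nat) :
  'C(m, r) = (\sum_(1 <= i < r.+1) 'C(m - i, (r - i).+1) + (r <= m))%N.
Proof.
elim: r m => [|r IHr] m; first by rewrite bin0 big_geq.
case: m => [|m].
  by rewrite bin0n big1_seq // => i _; rewrite sub0n bin0n.
rewrite binS big_nat_recl // IHr !subSS !subn0 ltnS addnA.
by under [in RHS]eq_bigr do rewrite !subSS.
Qed.

Lemma bin_pascal_square (a b c : nat) :
  ('C(a, b.+1) * 'C(c, a.+1) + 'C(a.+1, b.+1) * 'C(c, a.+2) + 'C(a, b) * 'C(c, a.+1)
   = 'C(a.+1, b.+1) * 'C(c.+1, a.+2))%N.
Proof. by rewrite !binS; ring. Qed.

(* For m < i the truncated m - i yields 'C(0, _) = 0, the intended value. *)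
Definition bonferroni_rem (r k m : nat) : nat :=
  \sum_(1 <= i < r.+1) 'C(k - i, r - i) * 'C(m - i, (k - i).+1).

Section BonferroniRemainder.
Variables r k m : nat.
Hypothesis le_rk : (r <= k)%N.

(* The i-th summands of the remainders at k and k + 1 telescope against
   'C(k.+1 - i, r - i) * 'C(m.+1 - i, k.+2 - i). *)
Lemma bonferroni_rem_term_telescope i : (i < r)%N ->
  ('C(k - i, r - i) * 'C(m - i, (k - i).+1)
   + 'C(k.+1 - i, r - i) * 'C(m - i, (k.+1 - i).+1)
   + 'C(k - i, r - i.+1) * 'C(m - i, k.+1 - i)
   = 'C(k.+1 - i, r - i) * 'C(m.+1 - i, k.+2 - i))%N.
Proof.
move=> lt_ir; rewrite -(subnSK lt_ir).
have -> : (k.+1 - i = (k - i).+1)%N by lia.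
have -> : (k.+2 - i = (k - i).+2)%N by lia.
have [le_im | lt_mi] := leqP i m.
  have -> : (m.+1 - i = (m - i).+1)%N by lia.
  exact: bin_pascal_square.
by rewrite (eqP (ltnW lt_mi)) (eqP lt_mi) !bin0n !muln0.
Qed.

Lemma bonferroni_rem_term_last :
  ('C(k - r, r - r) * 'C(m - r, (k - r).+1)
   + 'C(k.+1 - r, r - r) * 'C(m - r, (k.+1 - r).+1)
   = 'C(k.+1 - r, r - r) * 'C(m.+1 - r, k.+2 - r))%N.
Proof.
rewrite subnn !bin0 !mul1n.
have -> : (k.+1 - r = (k - r).+1)%N by lia.
have -> : (k.+2 - r = (k - r).+2)%N by lia.
have [le_rm | lt_mr] := leqP r m.
  have -> : (m.+1 - r = (m - r).+1)%N by lia.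
  by rewrite binS addnC.
by rewrite (eqP (ltnW lt_mr)) (eqP lt_mr) !bin0n.
Qed.

Lemma bonferroni_remS : (0 < r)%N ->
  (bonferroni_rem r k m + bonferroni_rem r k.+1 m = 'C(k, r.-1) * 'C(m, k.+1))%N.
Proof.
move=> r_gt0; rewrite /bonferroni_rem -big_split big_nat_recr //=.
rewrite bonferroni_rem_term_last.
rewrite (@sumn_telescope _ (fun i => 'C(k.+1 - i, r - i) * 'C(m.+1 - i, k.+2 - i))%N) //.
- by rewrite !subn1.
- by move=> i /andP[_ lt_ir]; rewrite !subSS bonferroni_rem_term_telescope.
Qed.

End BonferroniRemainder.

Lemma bonferroni_indicator (R : comPzRingType) (r k m : nat) : (0 < r)%N -> (r <= k)%N ->
  ((r <= m)%:R : R) =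
    \sum_(r <= j < k.+1) (-1) ^+ (r + j) * 'C(j.-1, r.-1)%:R * 'C(m, j)%:R
    + (-1) ^+ (r + k + 1) * (bonferroni_rem r k m)%:R.
Proof.
move=> r_gt0; elim: k => [|k IHk]; first by rewrite leqNgt r_gt0.
rewrite leq_eqVlt => /predU1P[<- | lt_rk].
  have -> : bonferroni_rem r r m = (\sum_(1 <= i < r.+1) 'C(m - i, (r - i).+1))%N.
    by apply: eq_bigr => i _; rewrite binn mul1n.
  rewrite big_nat1 (bin_pascal_sum m r) natrD binn addnn addn1 exprS.
  by rewrite -signr_odd odd_double expr0; ring.
have /(congr1 (GRing.natmul (1 : R))) := bonferroni_remS r k m lt_rk r_gt0.
rewrite natrD natrM => /(canRL (addKr _)) ->.
rewrite IHk // [in RHS](big_nat_recr _ _ _ (ltnW lt_rk)) /= !addn1 !addnS !exprS; ring.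
Qed.

Lemma binz_subn (m i j : nat) : binz (m%:Z - i%:Z) j.+1%:Z = 'C(m - i, j.+1).
Proof.
have [le_im | lt_mi] := leqP i m; first by rewrite subzn.
rewrite (eqP (ltnW lt_mi)) bin0n.
have : m%:Z - i%:Z < 0 by rewrite subr_lt0 ltz_nat.
by case: (m%:Z - i%:Z).
Qed.

Section OccurrencePattern.
Context {T : Type} {n : nat} (A : 'I_n -> set T).

Definition occ_set (x : T) : {set 'I_n} := [set i | `[< A i x >]].

Definition atom (S : {set 'I_n}) : set T := [set x | occ_set x = S].

Lemma num_occE : num_occ A = fun x => #|occ_set x|.
Proof.
apply/funext => x; apply: eq_card => i; rewrite inE.
by apply/idP/idP => [/set_mem | ?]; last exact/mem_set.
Qed.

Lemma inter_evE (I : {set 'I_n}) : inter_ev A I = [set x | I \subset occ_set x].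
Proof.
apply/seteqP; split => x /=.
  by move=> AIx; apply/fintype.subsetP => i iI; rewrite inE; apply/asboolP/AIx.
by move=> /fintype.subsetP sub_I i /sub_I; rewrite inE => /asboolP.
Qed.

End OccurrencePattern.

Section OccurrenceMean.
Context {d : measure_display} {T : measurableType d} {R : realType} {n : nat}.
Variables (P : probability T R) (A : 'I_n -> set T).
Hypothesis mA : forall i, measurable (A i).

Lemma measurable_atom (S : {set 'I_n}) : measurable (atom A S).
Proof.
have -> : atom A S = \bigcap_(i in [set: 'I_n]) (if i \in S then A i else ~` A i).
  apply/seteqP; split => x /=.
    by move=> occS i _; rewrite -occS inE; case: asboolP.
  move=> AxS; apply/finset.setP => i; rewrite inE; have := AxS i I.
  by case: (i \in S) => [/asboolP | /asboolPn/negbTE].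
apply: fin_bigcap_measurable => [|i _]; first exact: finite_finset.
by case: (i \in S); [exact: mA | exact/measurableC/mA].
Qed.

Lemma measurable_occ_pred (p : pred {set 'I_n}) :
  measurable [set x | p (occ_set A x)].
Proof.
have -> : [set x | p (occ_set A x)] = \bigcup_(S in [set S | p S]) atom A S.
  apply/seteqP; split => [x /= px | x [S /= pS]]; first by exists (occ_set A x).
  by rewrite /atom /= => ->.
by apply: fin_bigcup_measurable => [|S _]; [exact: finite_finset | exact: measurable_atom].
Qed.

Definition occ_mean (G : {set 'I_n} -> R) : R :=
  \sum_(S : {set 'I_n}) G S * fine (P (atom A S)).

Lemma occ_meanD (F G : {set 'I_n} -> R) :
  occ_mean (fun S => F S + G S) = occ_mean F + occ_mean G.
Proof. by rewrite -big_split; apply: eq_bigr => S _; rewrite mulrDl. Qed.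

Lemma occ_meanZ (c : R) (G : {set 'I_n} -> R) :
  occ_mean (fun S => c * G S) = c * occ_mean G.
Proof. by rewrite mulr_sumr; apply: eq_bigr => S _; rewrite mulrA. Qed.

Lemma occ_mean_sum (I : Type) (s : seq I) (p : pred I) (G : I -> {set 'I_n} -> R) :
  occ_mean (fun S => \sum_(i <- s | p i) G i S) = \sum_(i <- s | p i) occ_mean (G i).
Proof.
rewrite /occ_mean exchange_big; apply: eq_bigr => S _.
by rewrite mulr_suml.
Qed.

Lemma integral_occ (G : {set 'I_n} -> R) :
  (\int[P]_x (G (occ_set A x))%:E = (occ_mean G)%:E)%E.
Proof.
have atom_sum x : (G (occ_set A x))%:E =
    (\sum_(S : {set 'I_n}) (G S)%:E * (\1_(atom A S) x)%:E)%E.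
  rewrite (bigD1 (occ_set A x)) //= big1 ?adde0 => [|S /negPf occS].
    by rewrite indicE mem_set ?mule1.
  by rewrite indicE memNset ?mule0 // => /esym/eqP; rewrite occS.
under eq_integral do rewrite atom_sum.
have int_atom S : P.-integrable setT (fun x => (\1_(atom A S) x)%:E).
  exact/integrable_indic/measurable_atom.
rewrite integral_sum // => [|S]; last exact: integrableZl.
rewrite /occ_mean -sumEFin; apply: eq_bigr => S _.
rewrite integralZl // integral_indic // ?setIT; last exact: measurable_atom.
by rewrite EFinM fineK // fin_num_measure //; exact: measurable_atom.
Qed.

Lemma probability_occ (p : pred {set 'I_n}) :
  P [set x | p (occ_set A x)] = (occ_mean (fun S => (p S)%:R))%:E.
Proof.
rewrite -[X in P X]setIT -integral_indic //; last exact: measurable_occ_pred.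
rewrite -integral_occ; apply: eq_integral => x _.
by rewrite indicE mem_setE.
Qed.

Lemma Sj_occ_mean (j : nat) : Sj P A j = (occ_mean (fun S => 'C(#|S|, j)%:R))%:E.
Proof.
rewrite /Sj; under eq_bigr => I _ do rewrite inter_evE (probability_occ (fun S => I \subset S)).
rewrite sumEFin -occ_mean_sum; congr (occ_mean _)%:E; apply/funext => S.
rewrite -natr_sum -cards_draws -sum1_card big_mkcond [in RHS]big_mkcond /=.
by congr _%:R; apply: eq_bigr => I _; rewrite inE andbC; case: (_ == _); case: (_ \subset _).
Qed.

End OccurrenceMean.

Theorem theorem2 (d : measure_display) (T : measurableType d) (R : realType)
  (P : probability T R) (n : nat) (A : 'I_n -> set T)
  (mA : forall i, measurable (A i)) (r k : nat) (hr : (1 <= r)%N) (hrk : (r <= k)%N) :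
  P [set x | (r <= num_occ A x)%N] =
  (\sum_(r <= j < k.+1) (((-1) ^+ (r + j) * ('C(j.-1, r.-1))%:R : R)%:E * Sj P A j)
   + ((-1) ^+ (r + k + 1) : R)%:E *
     \sum_(1 <= i < r.+1)
        (('C(k - i, r - i))%:R : R)%:E *
        \int[P]_x ((binz ((num_occ A x)%:Z - i%:Z) ((k - i + 1)%N)%:Z)%:R : R)%:E)%E.
Proof.
rewrite num_occE /= (probability_occ P A mA (fun S => (r <= #|S|)%N)).
under eq_bigr => j _ do rewrite (Sj_occ_mean P A mA j) -EFinM -occ_meanZ.
under [X in (_ * X)%E]eq_bigr => i _ do
  rewrite (integral_occ P A mA (fun S => (binz (#|S|%:Z - i%:Z) (k - i + 1)%N%:Z)%:R))
          -EFinM -occ_meanZ.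
rewrite !sumEFin -EFinM -EFinD -!occ_mean_sum -occ_meanZ -occ_meanD.
congr (occ_mean _ _ _)%:E; apply/funext => S.
rewrite (bonferroni_indicator R _ _ #|S| hr hrk) /bonferroni_rem natr_sum.
by congr (_ + _ * _); apply: eq_bigr => i _; rewrite natrM addn1 binz_subn.
Qed.
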